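(* For games with cost function $c(x)=x^2$, the worst-case price of anarchy is strictly larger than $2$; that is, there exists such a game, a Nash equilibrium $s$ and an assignment $s^*$ of it with $C(s)/C(s^* )>2$.
   Context: A game is specified by a cost function $c$ (here $c(x)=x^2$), a time horizon $T$ with slots $t=1,\dots,T$, and a set of jobs, each job $j$ having integer release time $r_j$ and integer deadline $d_j$ with $0<r_j<d_j<T$. An assignment $s$ gives each job $j$ a slot $s_j$ with $r_j\le s_j<d_j$. The load of slot $t$ is $l_t(s)=|\{j:s_j=t\}|$ and $C(s)=\sum_{t=1}^T c(l_t(s))$. An assignment $s$ is a Nash equilibrium if for every job $j$ and every slot $t\neq s_j$ with $r_j\le t<d_j$: $\frac{c(l_{s_j}(s))}{l_{s_j}(s)}\le\frac{c(l_t(s)+1)}{l_t(s)+1}$. The price of anarchy of a game is $\max_{s\text{ a NE}}C(s)/\min_{s^*}C(s^* )$. *)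

From HB Require Import structures.
From mathcomp Require Import all_boot all_order all_algebra.
Set Implicit Arguments. Unset Strict Implicit. Unset Printing Implicit Defensive.
Import Order.TTheory GRing.Theory Num.Theory.
Local Open Scope ring_scope.

(* A game: horizon T, n jobs indexed by 'I_n, release times r, deadlines d. *)
Definition valid_game (T n : nat) (r d : 'I_n -> nat) : Prop :=
  forall j, (0 < r j)%N /\ (r j < d j)%N /\ (d j < T)%N.

Definition feasible (n : nat) (r d : 'I_n -> nat) (s : 'I_n -> nat) : Prop :=
  forall j, (r j <= s j)%N /\ (s j < d j)%N.

Definition load (n : nat) (s : 'I_n -> nat) (t : nat) : nat :=
  #|[pred j | s j == t]|.

Definition cost (c : nat -> rat) (T n : nat) (s : 'I_n -> nat) : rat :=
  \sum_(1 <= t < T.+1) c (load s t).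

Definition is_NE (c : nat -> rat) (n : nat) (r d : 'I_n -> nat)
    (s : 'I_n -> nat) : Prop :=
  feasible r d s /\
  forall (j : 'I_n) (t : nat), t != s j -> (r j <= t)%N -> (t < d j)%N ->
    c (load s (s j)) / (load s (s j))%:R <= c (load s t).+1 / ((load s t).+1)%:R.

Definition csq (x : nat) : rat := (x%:R) ^+ 2.

From mathcomp Require Import all_boot all_order all_algebra.
Import Order.TTheory GRing.Theory Num.Theory.
Local Open Scope ring_scope.

(* At the equilibrium slots 1..120 are empty and the following blocks of
   120, 60, 20, 5, 2 and 1 slots carry loads 1, ..., 6.  A job on a slot of
   load k is released at the first slot of the block of load k - 1 and all
   jobs share the deadline 329, so every slot it may move to already has load
   at least k - 1; since c(x)/x = x for c(x) = x^2, no move pays off.  The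
   equilibrium costs 120 + 60*4 + 20*9 + 5*16 + 2*25 + 36 = 706, whereas
   putting the 320 jobs of load at most 4 alone on slots 1..320 and the 16
   jobs of load 5 or 6 in pairs on slots 321..328 costs 320 + 8*4 = 352. *)

Lemma csq_divn (l : nat) : csq l / l%:R = l%:R.
Proof.
rewrite /csq; case: l => [|l]; first by rewrite mul0r.
by rewrite expr2 mulrK // unitfE pnatr_eq0.
Qed.

Lemma ltr_pdivrMn (R : numFieldType) (k a b : nat) :
  (0 < b)%N -> (k * b < a)%N -> k%:R < a%:R / b%:R :> R.
Proof. by move=> b_gt0 kb_lt_a; rewrite ltr_pdivlMr ?ltr0n // -natrM ltr_nat. Qed.

Lemma valid_game_of_feasible (T n : nat) (r d s : 'I_n -> nat) :
  feasible r d s -> (forall j, 0 < r j)%N -> (forall j, d j < T)%N ->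
  valid_game T r d.
Proof.
move=> feas r_gt0 d_ltT j; have [r_le_s s_lt_d] := feas j.
by split; last split; [| exact: leq_ltn_trans r_le_s s_lt_d |].
Qed.

Section SeqAssignment.

Variables (n : nat) (S : seq nat).
Hypothesis size_S : size S = n.

Definition of_seq : 'I_n -> nat := fun j => nth 0%N S j.

Lemma load_of_seq (t : nat) : load of_seq t = count_mem t S.
Proof.
rewrite /load -sum1_card -(big_mkord (fun j => nth 0%N S j == t) (fun _ => 1%N)).
rewrite sum1_count /index_iota subn0 -size_S.
by rewrite -[in RHS](mkseq_nth 0%N S) /mkseq count_map.
Qed.

Lemma cost_csq_of_seq (T : nat) :
  cost csq T of_seq = (\sum_(1 <= t < T.+1) count_mem t S ^ 2)%N%:R.
Proof.
rewrite /cost natr_sum; apply: eq_bigr => t _.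
by rewrite load_of_seq /csq natrX.
Qed.

Variables (R : nat -> nat) (D : nat).

Lemma feasible_of_seq :
  all (fun j => R j <= nth 0 S j < D)%N (iota 0 n) ->
  feasible (fun j : 'I_n => R j) (fun _ => D) of_seq.
Proof.
move=> /allP feas j; apply/andP/feas.
by rewrite mem_iota add0n ltn_ord.
Qed.

Lemma is_NE_csq_of_seq (l : nat -> nat) :
  all (fun t => count_mem t S == l t) (iota 0 D) ->
  all (fun j => R j <= nth 0 S j < D)%N (iota 0 n) ->
  all (fun j => all (fun t => l (nth 0 S j) <= (l t).+1)%N (index_iota (R j) D))
    (iota 0 n) ->
  is_NE csq (fun j : 'I_n => R j) (fun _ => D) of_seq.
Proof.
move=> /allP loads feas /allP stable; split; first exact: feasible_of_seq.
have loadE t : (t < D)%N -> load of_seq t = l t.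
  by move=> tD; rewrite load_of_seq; apply/eqP/loads; rewrite mem_iota.
move=> j t _ Rt tD; have [_ sD] := feasible_of_seq feas j.
rewrite !csq_divn ler_nat !loadE //.
have j_in : (j : nat) \in iota 0 n by rewrite mem_iota add0n ltn_ord.
have /allP := stable j j_in; apply.
by rewrite mem_index_iota Rt.
Qed.

End SeqAssignment.

Definition block_sizes : seq nat := [:: 120; 120; 60; 20; 5; 2; 1]%N.

(* Entry t is the load of slot t; slot 0 is a dummy. *)
Definition ne_loads : seq nat :=
  0%N :: flatten [seq nseq (nth 0 block_sizes k) k | k <- iota 0 7].

Definition ne_load (t : nat) : nat := nth 0 ne_loads t.

Definition ne_slots : seq nat := flatten [seq nseq (ne_load t) t | t <- iota 1 328].

Definition opt_slots : seq nat :=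
  iota 1 320 ++ flatten [seq [:: t; t] | t <- iota 321 8].

Definition release (k : nat) : nat := (sumn (take k.-1 block_sizes)).+1.

Definition job_release (j : nat) : nat := release (ne_load (nth 0 ne_slots j)).

Theorem lemma3 :
  exists (T n : nat) (r d : 'I_n -> nat),
    valid_game T r d /\
    exists (s sstar : 'I_n -> nat),
      is_NE csq r d s /\ feasible r d sstar /\
      cost csq T s / cost csq T sstar > 2.
Proof.
have size_ne : size ne_slots = 336%N by vm_compute.
have size_opt : size opt_slots = 336%N by vm_compute.
have opt_feasible : feasible (fun j : 'I_336 => job_release j) (fun _ => 329%N)
                             (of_seq 336 opt_slots).
  by apply: feasible_of_seq; vm_compute.
exists 330%N, 336%N, (fun j => job_release j), (fun _ => 329%N).
split; first exact: valid_game_of_feasible opt_feasible _ _.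
exists (of_seq 336 ne_slots), (of_seq 336 opt_slots).
split; first by apply: (is_NE_csq_of_seq _ _ size_ne _ _ ne_load); vm_compute.
split=> //.
by rewrite !cost_csq_of_seq //; apply: ltr_pdivrMn; rewrite unlock; vm_compute.
Qed.
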